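(* Let $\beta>0$ and $m\ge1$. For $\delta>0$ and $n\ge1$ let $\mathcal{B}_\delta$ be the event \[ \sum_{i=1}^n\left(\frac{\Delta(H_{mi})}{(mi)^{2/(2+\beta)}}\right)^2\ge n^{\frac{\beta}{2+\beta}+\delta}. \] Then for any $\delta>0$ and $\gamma>0$ there exists a constant $L$, depending on $\delta,\gamma,\beta,m$ but not on $n$, such that $\Pr(\mathcal{B}_\delta)\le L\,n^{-\gamma}$ for all $n\ge1$.
   Context: Fix a real $\beta>0$ and a positive integer $m$. The random tree process $(G^n_{1,\beta})_{n\ge1}$ is defined as follows. $G^1_{1,\beta}$ consists of a single vertex $v_1$ and no edges. Given $G^n_{1,\beta}$ with vertices $v_1,\dots,v_n$ and directed edges $e_2,\dots,e_n$ (where $e_i$ is the edge whose tail is $v_i$), $G^{n+1}_{1,\beta}$ is obtained by adding a vertex $v_{n+1}$ and a directed edge $e_{n+1}$ with tail $v_{n+1}$ and head a ''target vertex'' determined by a random variable $f_{n+1}$, independent of $f_2,\dots,f_n$, taking values in $\Omega_{n+1}=\{(i,v):1\le i\le n\}\cup\{(i,h),(i,t):2\le i\le n\}$ with $\Pr(f_{n+1}=(i,v))=\beta/((2+\beta)n-2)$ and $\Pr(f_{n+1}=(i,h))=\Pr(f_{n+1}=(i,t))=1/((2+\beta)n-2)$. If $f_{n+1}=(i,v)$ the target is $v_i$ (chosen ''uniformly''); if $f_{n+1}=(i,h)$ the target is the head of $e_i$, and if $f_{n+1}=(i,t)$ the target is the tail $v_i$ of $e_i$ (chosen ''preferentially'',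 by copying the head half-edge, resp. tail half-edge, of $e_i$). Consequently the target is $v_i$ with probability $(d_n(v_i)+\beta)/((2+\beta)n-2)$, where $d_n(v)$ is the degree of $v$ in $G^n_{1,\beta}$. Each edge is regarded as two half-edges, one at each endpoint; the degree of a vertex is the number of half-edges at it (loops count twice). For $t\ge1$, $H_t$ is the undirected multigraph formed from $G^t_{1,\beta}$ by identifying, for each $j<\lceil t/m\rceil$, the vertices $v_{(j-1)m+1},\dots,v_{jm}$ into one vertex $w_j$, and identifying the remaining vertices into one vertex $w_{\lceil t/m\rceil}$ (all edges kept). $\Delta(G)$ denotes the maximum degree of $G$. Known input (M\'ori): for any positive integer $k$ there exists $\tilde M_k$ such that for all $n$, $\mathbb{E}\big[\big((\Delta(G^n_{1,\beta})+\beta)/n^{1/(2+\beta)}\big)^k\big]\le\tilde M_k$. *)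

(* Reals.  The random tree process G^n_{1,beta} is a finite
   random process; probabilities are computed exactly as finite weighted
   sums over all possible choice sequences (f_2, ..., f_N). *)
From Stdlib Require Import Reals List Arith.
Import ListNotations.
Open Scope R_scope.

(* A value of f_{n+1} in Omega_{n+1}:  CV i = (i,v), CH i = (i,h), CT i = (i,t). *)
Inductive choice : Type := CV (i : nat) | CH (i : nat) | CT (i : nat).

(* Omega_{n+1}, where n = number of existing vertices. *)
Definition omega (n : nat) : list choice :=
  map CV (seq 1 n) ++ map CH (seq 2 (n - 1)) ++ map CT (seq 2 (n - 1)).

(* Pr(f_{n+1} = f). *)
Definition pw (beta : R) (n : nat) (f : choice) : R :=
  match f with
  | CV _ => beta / ((2 + beta) * INR n - 2)
  | _ => 1 / ((2 + beta) * INR n - 2)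
  end.

Definition sumR (l : list R) : R := fold_right Rplus 0 l.

(* Expectation of g over outcomes (f_2,...,f_N) of the process G^N, N >= 1:
   [expect_from beta steps n fs g] : currently n vertices, choices fs made so far,
   [steps] more vertices to add. *)
Fixpoint expect_from (beta : R) (steps n : nat) (fs : list choice)
  (g : list choice -> R) : R :=
  match steps with
  | O => g fs
  | S s => sumR (map (fun f => pw beta n f *
                        expect_from beta s (S n) (fs ++ [f]) g) (omega n))
  end.

Definition expect (beta : R) (N : nat) (g : list choice -> R) : R :=
  expect_from beta (N - 1) 1 [] g.

(* Head (as a vertex index) of the new edge given heads of e_2..e_n
   (hs has head of e_k at position k-2) and the choice f. *)
Definition target (hs : list nat) (f : choice) : nat :=
  match f with
  | CV i => i
  | CH i => nth (i - 2) hs 0%nat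
  | CT i => i
  end.

(* heads fs = [head e_2; ...; head e_N] for fs = [f_2; ...; f_N]. *)
Definition heads (fs : list choice) : list nat :=
  fold_left (fun hs f => hs ++ [target hs f]) fs [].

Definition ceil_div (a m : nat) : nat := ((a + m - 1) / m)%nat.

(* Index j of the vertex w_j of H_t containing v_v. *)
Definition blk (m t v : nat) : nat := Nat.min (ceil_div v m) (ceil_div t m).

Definition b2n (b : bool) : nat := if b then 1%nat else 0%nat.

(* Degree of w_j in H_t: half-edges of e_2..e_t (tail v_k, head hs_k)
   landing in block j (loops count twice). *)
Definition degH (m t : nat) (hs : list nat) (j : nat) : nat :=
  fold_right Nat.add 0%nat
    (map (fun k => (b2n (Nat.eqb (blk m t k) j)
                    + b2n (Nat.eqb (blk m t (nth (k - 2) hs 0%nat)) j))%nat)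
         (seq 2 (t - 1))).

Definition maxdegH (m t : nat) (hs : list nat) : nat :=
  fold_right Nat.max 0%nat (map (degH m t hs) (seq 1 (ceil_div t m))).

Definition B_ind (beta : R) (m n : nat) (delta : R) (fs : list choice) : R :=
  let hs := heads fs in
  if Rle_dec (Rpower (INR n) (beta / (2 + beta) + delta))
       (sumR (map (fun i => (INR (maxdegH m (m * i) hs)
                             / Rpower (INR (m * i)) (2 / (2 + beta))) ^ 2)
                  (seq 1 n)))
  then 1 else 0.

Definition prob_B (beta : R) (m n : nat) (delta : R) : R :=
  expect beta (m * n) (B_ind beta m n delta).

(* Put eta = min(1/2, delta(2+beta)/4), p = 2(1-eta)/(2+beta), w_i = i^{-p},
   W = sum_{i<=n} w_i, T = n^{beta/(2+beta)+delta} and let y_i be the i-th summand.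
   If sum_i y_i >= T then y_i W >= T w_i for some i (pigeonhole), hence for every k
       Pr(B_delta) <= sum_i E[(y_i W / (T w_i))^k]                  (Markov).
   Moments of the maximum degree are obtained from scratch: for a fixed vertex v,
   rising_K(d_t(v) + beta) / prod_{s<t} (1 + K/((2+beta)s - 2)) is a supermartingale, and the
   product is O(t^{K(1+eta)/(2+beta)}); since Delta(H_t) <= m max_v d_t(v) this gives
   E[Delta(H_t)^K] = O(t^{1+K(1+eta)/(2+beta)}).  With these weights the dependence on i
   cancels exactly, so every Markov term is O(n (W/T)^k); finally W <= (2/q) n^q with
   q = 1 - p gives W/T <= (2/q) n^{-delta/2}, and k with k delta/2 >= 2 + gamma concludes. *)

From Stdlib Require Import Reals Lra Lia List Classical.
Import ListNotations.
Open Scope R_scope.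

Lemma div_nonneg a b : 0 <= a -> 0 < b -> 0 <= a / b.
Proof. intros. unfold Rdiv. apply Rmult_le_pos; [lra | left; apply Rinv_0_lt_compat; lra]. Qed.

Lemma frac_le a b c d : 0 < b -> 0 < d -> a * d <= c * b -> a / b <= c / d.
Proof.
  intros Hb Hd H. apply Rmult_le_reg_r with (b * d); [nra |].
  replace (a / b * (b * d)) with (a * d) by (field; lra).
  replace (c / d * (b * d)) with (c * b) by (field; lra). auto.
Qed.

Lemma Rpower_pos x y : 0 < Rpower x y.
Proof. unfold Rpower. apply exp_pos. Qed.

Lemma sumR_app l1 l2 : sumR (l1 ++ l2) = sumR l1 + sumR l2.
Proof. induction l1; simpl; [lra | rewrite IHl1; lra]. Qed.

Lemma sumR_map_plus {A} (f g : A -> R) l :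
  sumR (map (fun x => f x + g x) l) = sumR (map f l) + sumR (map g l).
Proof. induction l; simpl; [lra | rewrite IHl; lra]. Qed.

Lemma sumR_map_scal {A} (c : R) (f : A -> R) l :
  sumR (map (fun x => c * f x) l) = c * sumR (map f l).
Proof. induction l; simpl; [lra | rewrite IHl; lra]. Qed.

Lemma sumR_map_ext {A} (f g : A -> R) l :
  (forall x, In x l -> f x = g x) -> sumR (map f l) = sumR (map g l).
Proof. induction l; simpl; intros H; [lra |]. rewrite H, IHl; auto. Qed.

Lemma sumR_map_le {A} (f g : A -> R) l :
  (forall x, In x l -> f x <= g x) -> sumR (map f l) <= sumR (map g l).
Proof.
  induction l; simpl; intros H; [lra |].
  assert (f a <= g a) by auto. assert (sumR (map f l) <= sumR (map g l)) by auto. lra.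
Qed.

Lemma sumR_map_nonneg {A} (f : A -> R) l :
  (forall x, In x l -> 0 <= f x) -> 0 <= sumR (map f l).
Proof.
  induction l; simpl; intros H; [lra |].
  assert (0 <= f a) by auto. assert (0 <= sumR (map f l)) by auto. lra.
Qed.

Lemma sumR_map_const {A} (c : R) (l : list A) :
  sumR (map (fun _ => c) l) = INR (length l) * c.
Proof. induction l; simpl length; [simpl; lra |]. rewrite S_INR. simpl. rewrite IHl. lra. Qed.

Lemma sumR_le_const {A} (f : A -> R) l c :
  (forall x, In x l -> f x <= c) -> sumR (map f l) <= INR (length l) * c.
Proof. rewrite <- sumR_map_const. apply sumR_map_le. Qed.

Lemma sumR_ge_elem {A} (f : A -> R) l j :
  (forall i, In i l -> 0 <= f i) -> In j l -> f j <= sumR (map f l).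
Proof.
  induction l as [|a l IH]; intros Hn Hj; [easy |]. simpl.
  assert (0 <= sumR (map f l)) by (apply sumR_map_nonneg; intros; apply Hn; right; auto).
  destruct Hj as [<- | Hj]; [lra |]. assert (0 <= f a) by (apply Hn; left; auto).
  assert (f j <= sumR (map f l)) by (apply IH; auto; intros; apply Hn; right; auto). lra.
Qed.

Definition nsum (l : list nat) : nat := fold_right Nat.add 0%nat l.

Lemma nsum_app l1 l2 : nsum (l1 ++ l2) = (nsum l1 + nsum l2)%nat.
Proof. induction l1; simpl; [auto | rewrite IHl1; lia]. Qed.

Lemma nsum_plus {A} (f g : A -> nat) l :
  nsum (map (fun x => f x + g x)%nat l) = (nsum (map f l) + nsum (map g l))%nat.
Proof. induction l; simpl; auto. rewrite IHl. lia. Qed.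

Lemma nsum_exchange {A B} (f : A -> B -> nat) l1 l2 :
  nsum (map (fun a => nsum (map (fun b => f a b) l2)) l1) =
  nsum (map (fun b => nsum (map (fun a => f a b) l1)) l2).
Proof.
  induction l1; simpl.
  - induction l2; simpl; auto.
  - rewrite IHl1, nsum_plus. reflexivity.
Qed.

Lemma nsum_le {A} (f g : A -> nat) l :
  (forall x, In x l -> f x <= g x)%nat -> (nsum (map f l) <= nsum (map g l))%nat.
Proof.
  induction l; simpl; intros H; [lia |]. pose proof (H a (or_introl eq_refl)).
  assert (nsum (map f l) <= nsum (map g l))%nat by (apply IHl; intros; apply H; right; auto).
  lia.
Qed.

Lemma nsum_le_const {A} (f : A -> nat) l c :
  (forall x, In x l -> f x <= c)%nat -> (nsum (map f l) <= length l * c)%nat.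
Proof.
  induction l; simpl; intros H; [lia |]. pose proof (H a (or_introl eq_refl)).
  assert (nsum (map f l) <= length l * c)%nat by (apply IHl; intros; apply H; right; auto).
  lia.
Qed.

Lemma INR_nsum {A} (g : A -> nat) l :
  INR (nsum (map g l)) = sumR (map (fun x => INR (g x)) l).
Proof. induction l; simpl; [auto | rewrite plus_INR, IHl; auto]. Qed.

Lemma count_seq a len v :
  nsum (map (fun i => b2n (i =? v)) (seq a len)) =
  if ((a <=? v) && (v <? a + len))%bool then 1%nat else 0%nat.
Proof.
  revert a; induction len; intros a; simpl.
  - destruct (a <=? v) eqn:E1; destruct (v <? a + 0) eqn:E2; simpl; auto.
    apply Nat.leb_le in E1; apply Nat.ltb_lt in E2; lia.
  - rewrite IHlen.
    destruct (a =? v) eqn:E; destruct (S a <=? v) eqn:E1; destruct (v <? S a + len) eqn:E2;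
      destruct (a <=? v) eqn:E3; destruct (v <? a + S len) eqn:E4; simpl; auto;
      repeat match goal with
      | H : (_ <=? _) = true |- _ => apply Nat.leb_le in H
      | H : (_ <=? _) = false |- _ => apply Nat.leb_gt in H
      | H : (_ <? _) = true |- _ => apply Nat.ltb_lt in H
      | H : (_ <? _) = false |- _ => apply Nat.ltb_ge in H
      | H : (_ =? _) = true |- _ => apply Nat.eqb_eq in H
      | H : (_ =? _) = false |- _ => apply Nat.eqb_neq in H
      end; lia.
Qed.

Definition nmax (l : list nat) : nat := fold_right Nat.max 0%nat l.

Lemma nmax_ge l x : In x l -> (x <= nmax l)%nat.
Proof.
  induction l; simpl; intros H; [easy |].
  destruct H; subst; [lia |]. specialize (IHl H). lia.
Qed.

Lemma nmax_le l c : (forall x, In x l -> x <= c)%nat -> (nmax l <= c)%nat.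
Proof. induction l; simpl; intros H; [lia |]. apply Nat.max_lub; auto. Qed.

Lemma pow_nmax_le (l : list nat) K : (1 <= K)%nat ->
  INR (nmax l) ^ K <= sumR (map (fun x => INR x ^ K) l).
Proof.
  intros HK. induction l; simpl.
  - destruct K; [lia |]. simpl. lra.
  - assert (0 <= INR a ^ K) by (apply pow_le, pos_INR).
    assert (0 <= sumR (map (fun x => INR x ^ K) l))
      by (apply sumR_map_nonneg; intros; apply pow_le, pos_INR).
    destruct (Nat.le_ge_cases a (nmax l)).
    + rewrite Nat.max_r by auto. lra.
    + rewrite Nat.max_l by auto. lra.
Qed.

(** * The process: choice sets, heads, reachable histories *)

Lemma heads_app fs f : heads (fs ++ [f]) = heads fs ++ [target (heads fs) f].
Proof. unfold heads. rewrite fold_left_app. reflexivity. Qed.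

Lemma heads_length fs : length (heads fs) = length fs.
Proof.
  induction fs as [|f fs IH] using rev_ind; [reflexivity |].
  rewrite heads_app, !length_app, IH. reflexivity.
Qed.

(* Every edge e_{j+2} points to an already existing vertex v_h with h <= j+1. *)
Definition heads_before (hs : list nat) : Prop :=
  forall j, (j < length hs)%nat -> (nth j hs 0 <= j + 1)%nat.

(* Histories (f_2, ..., f_n) that can occur when G^n has been built. *)
Definition reachable (n : nat) (fs : list choice) : Prop :=
  (1 <= n)%nat /\ length fs = (n - 1)%nat /\ heads_before (heads fs).

Lemma reachable_start : reachable 1 [].
Proof. split; [lia |]. split; [reflexivity |]. intros j Hj. simpl in Hj. lia. Qed.

Lemma in_omega n f : In f (omega n) ->
  match f with
  | CV i => (1 <= i <= n)%nat
  | CH i | CT i => (2 <= i <= n)%nat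
  end.
Proof.
  unfold omega. rewrite !in_app_iff, !in_map_iff.
  intros [[i [<- Hi]] | [[i [<- Hi]] | [i [<- Hi]]]]; apply in_seq in Hi; lia.
Qed.

Lemma target_le n fs f : reachable n fs -> In f (omega n) -> (target (heads fs) f <= n)%nat.
Proof.
  intros [Hn [Hl Hh]] Hf. apply in_omega in Hf. destruct f; simpl; try lia.
  assert (i - 2 < length (heads fs))%nat by (rewrite heads_length; lia).
  specialize (Hh _ H). lia.
Qed.

Lemma reachable_step n fs f : reachable n fs -> In f (omega n) -> reachable (S n) (fs ++ [f]).
Proof.
  intros Hr Hf. pose proof (target_le n fs f Hr Hf) as Ht. destruct Hr as [Hn [Hl Hh]].
  split; [lia |]. split; [rewrite length_app; simpl; lia |].
  rewrite heads_app. intros j Hj. rewrite length_app, heads_length in Hj. simpl in Hj.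
  destruct (Nat.lt_ge_cases j (length fs)).
  - rewrite app_nth1 by (rewrite heads_length; auto). apply Hh. rewrite heads_length. auto.
  - assert (j = length (heads fs)) by (rewrite heads_length; lia). subst j.
    rewrite nth_middle, heads_length. lia.
Qed.

Lemma reachable_heads_le N fs t k : reachable N fs -> (t <= N)%nat -> (2 <= k <= t)%nat ->
  (nth (k - 2) (heads fs) 0 <= t)%nat.
Proof.
  intros [Hn [Hl Hh]] Ht Hk.
  assert (k - 2 < length (heads fs))%nat by (rewrite heads_length; lia).
  specialize (Hh _ H). lia.
Qed.

(** * Expectation over the process *)

Definition Dn (beta : R) (n : nat) : R := (2 + beta) * INR n - 2.

Lemma Dn_pos beta n : 0 < beta -> (1 <= n)%nat -> 0 < Dn beta n.
Proof. intros. unfold Dn. assert (1 <= INR n) by (apply (le_INR 1); auto). nra. Qed.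

Lemma pw_nonneg beta n f : 0 < beta -> (1 <= n)%nat -> 0 <= pw beta n f.
Proof.
  intros Hb Hn. pose proof (Dn_pos beta n Hb Hn). unfold Dn in H.
  destruct f; simpl; apply div_nonneg; lra.
Qed.

Definition step_mean (beta : R) (n : nat) (fs : list choice) (F : list choice -> R) : R :=
  sumR (map (fun f => pw beta n f * F (fs ++ [f])) (omega n)).

Lemma omega_sum (n : nat) (h : choice -> R) :
  sumR (map h (omega n)) = sumR (map (fun i => h (CV i)) (seq 1 n))
    + sumR (map (fun i => h (CH i)) (seq 2 (n - 1)))
    + sumR (map (fun i => h (CT i)) (seq 2 (n - 1))).
Proof. unfold omega. rewrite !map_app, !sumR_app, !map_map. ring. Qed.

Lemma pw_total beta n : 0 < beta -> (1 <= n)%nat -> sumR (map (pw beta n) (omega n)) = 1.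
Proof.
  intros Hb Hn. rewrite omega_sum. simpl pw.
  rewrite !sumR_map_const, !length_seq, minus_INR by auto. simpl INR.
  pose proof (Dn_pos beta n Hb Hn). unfold Dn in H. field. lra.
Qed.

Lemma step_mean_const beta n fs c : 0 < beta -> (1 <= n)%nat ->
  step_mean beta n fs (fun _ => c) = c.
Proof.
  intros Hb Hn. unfold step_mean.
  rewrite (sumR_map_ext _ (fun f => c * pw beta n f)) by (intros; ring).
  rewrite sumR_map_scal, pw_total by auto. ring.
Qed.

Lemma expect_plus beta s n fs g1 g2 :
  expect_from beta s n fs (fun x => g1 x + g2 x) =
  expect_from beta s n fs g1 + expect_from beta s n fs g2.
Proof.
  revert n fs; induction s; intros n fs; simpl; [reflexivity |].
  rewrite <- sumR_map_plus. apply sumR_map_ext. intros f _. rewrite IHs. ring.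
Qed.

Lemma expect_scal beta s n fs c g :
  expect_from beta s n fs (fun x => c * g x) = c * expect_from beta s n fs g.
Proof.
  revert n fs; induction s; intros n fs; simpl; [reflexivity |].
  rewrite <- sumR_map_scal. apply sumR_map_ext. intros f _. rewrite IHs. ring.
Qed.

Lemma expect_zero beta s n fs : expect_from beta s n fs (fun _ => 0) = 0.
Proof.
  revert n fs; induction s; intros n fs; simpl; [reflexivity |].
  transitivity (sumR (map (fun _ : choice => 0) (omega n)));
    [| rewrite sumR_map_const; ring].
  apply sumR_map_ext. intros f _. rewrite IHs. ring.
Qed.

Lemma expect_sum {A} beta s n fs (h : A -> list choice -> R) l :
  expect_from beta s n fs (fun x => sumR (map (fun i => h i x) l)) =
  sumR (map (fun i => expect_from beta s n fs (h i)) l).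
Proof.
  induction l; simpl; [apply expect_zero |]. rewrite expect_plus, IHl. reflexivity.
Qed.

Lemma expect_ext beta s n fs g1 g2 :
  (forall x, g1 x = g2 x) -> expect_from beta s n fs g1 = expect_from beta s n fs g2.
Proof.
  revert n fs; induction s; intros n fs H; simpl; [auto |].
  apply sumR_map_ext. intros f _. rewrite (IHs _ _ H). reflexivity.
Qed.

Lemma expect_mono beta s n fs g1 g2 : 0 < beta -> reachable n fs ->
  (forall x, reachable (n + s) x -> g1 x <= g2 x) ->
  expect_from beta s n fs g1 <= expect_from beta s n fs g2.
Proof.
  intros Hb. revert n fs; induction s; intros n fs Hr H; simpl.
  - apply H. rewrite Nat.add_0_r. auto.
  - apply sumR_map_le. intros f Hf. apply Rmult_le_compat_l.
    + apply pw_nonneg; auto. apply Hr.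
    + apply IHs; [apply reachable_step; auto |].
      intros x Hx. apply H. rewrite <- Nat.add_succ_comm. auto.
Qed.

Lemma expect_super beta s n fs g (F : nat -> list choice -> R) : 0 < beta -> reachable n fs ->
  (forall x, reachable (n + s) x -> g x <= F (n + s)%nat x) ->
  (forall k x, (n <= k)%nat -> reachable k x -> step_mean beta k x (F (S k)) <= F k x) ->
  expect_from beta s n fs g <= F n fs.
Proof.
  intros Hb. revert n fs; induction s; intros n fs Hr Hg HF; simpl.
  - rewrite Nat.add_0_r in Hg. auto.
  - eapply Rle_trans; [| apply (HF n fs (le_n _) Hr)].
    apply sumR_map_le. intros f Hf. apply Rmult_le_compat_l.
    + apply pw_nonneg; auto. apply Hr.
    + apply IHs; [apply reachable_step; auto | |].
      * intros x Hx. rewrite Nat.add_succ_comm. apply Hg. rewrite <- Nat.add_succ_comm. auto.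
      * intros k x Hk Hx. apply HF; auto. lia.
Qed.

Definition vdeg (t v : nat) (hs : list nat) : nat :=
  nsum (map (fun k => b2n (k =? v) + b2n (nth (k - 2) hs 0 =? v))%nat (seq 2 (t - 1))).

Lemma vdeg_split t v hs :
  vdeg t v hs = (nsum (map (fun k => b2n (k =? v)) (seq 2 (t - 1)))
                 + nsum (map (fun k => b2n (nth (k - 2) hs 0 =? v)) (seq 2 (t - 1))))%nat.
Proof. unfold vdeg. apply nsum_plus. Qed.

Lemma vdeg_step n v hs x : (1 <= n)%nat -> length hs = (n - 1)%nat ->
  vdeg (S n) v (hs ++ [x]) = (vdeg n v hs + b2n (S n =? v) + b2n (x =? v))%nat.
Proof.
  intros Hn Hl. unfold vdeg.
  replace (S n - 1)%nat with (S (n - 1)) by lia. rewrite seq_S, map_app, nsum_app.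
  replace (2 + (n - 1))%nat with (S n) by lia.
  cbn [map nsum fold_right]. replace (S n - 2)%nat with (length hs) by lia.
  rewrite nth_middle, (map_ext_in _ (fun k => b2n (k =? v) + b2n (nth (k - 2) hs 0 =? v))%nat);
    [lia |].
  intros k Hk. apply in_seq in Hk. rewrite app_nth1 by lia. reflexivity.
Qed.

Lemma vdeg_app_ge t n v hs x : (t <= n)%nat -> length hs = (n - 1)%nat ->
  vdeg t v (hs ++ [x]) = vdeg t v hs.
Proof.
  intros Ht Hl. unfold vdeg. f_equal. apply map_ext_in. intros k Hk. apply in_seq in Hk.
  rewrite app_nth1 by lia. reflexivity.
Qed.

Lemma vdeg_unborn n fs v : reachable n fs -> (n < v)%nat -> vdeg n v (heads fs) = 0%nat.
Proof.
  intros Hr Hv. unfold vdeg.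
  enough (forall l, (forall k, In k l -> 2 <= k <= n)%nat ->
    nsum (map (fun k => b2n (k =? v) + b2n (nth (k - 2) (heads fs) 0 =? v))%nat l) = 0%nat)
    by (apply H; intros k Hk; apply in_seq in Hk; lia).
  induction l; simpl; auto. intros H. rewrite IHl by auto.
  assert (2 <= a <= n)%nat by auto.
  pose proof (reachable_heads_le n fs n a Hr (le_n n) H0).
  destruct (a =? v) eqn:E1; [apply Nat.eqb_eq in E1; lia |].
  destruct (nth (a - 2) (heads fs) 0%nat =? v) eqn:E2; [apply Nat.eqb_eq in E2; lia |].
  reflexivity.
Qed.

Lemma hit_prob beta n hs v : (1 <= v <= n)%nat -> length hs = (n - 1)%nat ->
  sumR (map (fun f => pw beta n f * INR (b2n (target hs f =? v))) (omega n)) =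
  (beta + INR (vdeg n v hs)) / Dn beta n.
Proof.
  intros Hv Hl. rewrite omega_sum. simpl pw. simpl target.
  rewrite !sumR_map_scal, <- !INR_nsum, vdeg_split, plus_INR, !count_seq.
  destruct (1 <=? v) eqn:E1; [| apply Nat.leb_gt in E1; lia].
  destruct (v <? 1 + n) eqn:E2; [| apply Nat.ltb_ge in E2; lia]. simpl.
  destruct (2 <=? v) eqn:E3; destruct (v <? 2 + (n - 1)) eqn:E4; simpl;
    unfold Dn, Rdiv; ring.
Qed.

(** * The rising-factorial supermartingale of a vertex degree *)

Fixpoint rising (K : nat) (x : R) : R :=
  match K with O => 1 | S K' => rising K' x * (x + INR K') end.

Lemma rising_pos K x : 0 < x -> 0 < rising K x.
Proof.
  intros. induction K; simpl; [lra |].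
  apply Rmult_lt_0_compat; auto. pose proof (pos_INR K); lra.
Qed.

Lemma rising_shift K x : rising K (x + 1) * x = rising K x * (x + INR K).
Proof.
  induction K; cbn [rising]; [simpl; ring |]. rewrite S_INR.
  replace (rising K (x + 1) * (x + 1 + INR K) * x)
    with (rising K (x + 1) * x * (x + 1 + INR K)) by ring.
  rewrite IHK. ring.
Qed.

Lemma rising_b2n K X (b : bool) :
  rising K (X + INR (b2n b)) = rising K X + INR (b2n b) * (rising K (X + 1) - rising K X).
Proof. destruct b; cbn [b2n INR]; [ring |]. rewrite Rplus_0_r. ring. Qed.

Lemma rising_mono K x y : 0 <= x <= y -> rising K x <= rising K y.
Proof.
  intros H. induction K; simpl; [lra |]. pose proof (pos_INR K).
  assert (0 <= rising K x).
  { clear IHK. induction K; simpl; [lra |]. pose proof (pos_INR K).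
    apply Rmult_le_pos; [apply IHK; auto | lra]. }
  apply Rmult_le_compat; lra.
Qed.

Lemma pow_le_rising K x b : 0 <= x -> 0 <= b -> x ^ K <= rising K (x + b).
Proof.
  intros. induction K; simpl; [lra |]. pose proof (pos_INR K).
  rewrite Rmult_comm. apply Rmult_le_compat; try lra. apply pow_le; auto.
Qed.

Fixpoint mnorm (beta : R) (K : nat) (t : nat) : R :=
  match t with
  | O => 1
  | S t' => match t' with O => 1 | _ => mnorm beta K t' * (1 + INR K / Dn beta t') end
  end.

Lemma mnorm_S beta K n : (1 <= n)%nat -> mnorm beta K (S n) = mnorm beta K n * (1 + INR K / Dn beta n).
Proof. intros. destruct n; [lia |]. reflexivity. Qed.

Lemma mnorm_factor_ge1 beta K n : 0 < beta -> (1 <= n)%nat -> 1 <= 1 + INR K / Dn beta n.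
Proof.
  intros Hb Hn. pose proof (Dn_pos beta n Hb Hn).
  assert (0 <= INR K / Dn beta n) by (apply div_nonneg; [apply pos_INR | lra]). lra.
Qed.

Lemma mnorm_pos beta K n : 0 < beta -> 0 < mnorm beta K n.
Proof.
  intros Hb. induction n as [|n IH]; [simpl; lra |]. destruct n; [simpl; lra |].
  rewrite mnorm_S by lia. pose proof (mnorm_factor_ge1 beta K (S n) Hb ltac:(lia)).
  apply Rmult_lt_0_compat; lra.
Qed.

Lemma mnorm_le_S beta K n : 0 < beta -> (1 <= n)%nat -> mnorm beta K n <= mnorm beta K (S n).
Proof.
  intros Hb Hn. rewrite mnorm_S by auto. pose proof (mnorm_pos beta K n Hb).
  pose proof (mnorm_factor_ge1 beta K n Hb Hn). nra.
Qed.

Lemma mnorm_mono beta K n p : 0 < beta -> (1 <= n <= p)%nat -> mnorm beta K n <= mnorm beta K p.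
Proof.
  intros Hb [Hn Hp]. induction Hp; [lra |].
  eapply Rle_trans; [apply IHHp | apply mnorm_le_S; auto; lia].
Qed.

(* Degree of v_v in G^t, where a vertex not yet born already counts its future tail. *)
Definition edeg (t v : nat) (hs : list nat) : nat := (vdeg t v hs + b2n (t <? v))%nat.

Lemma edeg_unborn n fs v : reachable n fs -> (n < v)%nat -> edeg n v (heads fs) = 1%nat.
Proof.
  intros Hr Hv. unfold edeg. rewrite vdeg_unborn by auto.
  apply Nat.ltb_lt in Hv. rewrite Hv. reflexivity.
Qed.

Lemma edeg_step_unborn k x f v : reachable k x -> In f (omega k) -> (k < v)%nat ->
  edeg (S k) v (heads (x ++ [f])) = 1%nat.
Proof.
  intros Hr Hf Hv. destruct (Nat.lt_ge_cases (S k) v).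
  - apply edeg_unborn; auto. apply reachable_step; auto.
  - pose proof (target_le k x f Hr Hf). pose proof (vdeg_unborn k x v Hr Hv).
    destruct Hr as [Hk [Hl _]].
    unfold edeg. rewrite heads_app, vdeg_step by (rewrite ?heads_length; auto).
    replace v with (S k) in * by lia. rewrite H1. rewrite Nat.eqb_refl, Nat.ltb_irrefl.
    replace (target (heads x) f =? S k) with false by (symmetry; apply Nat.eqb_neq; lia).
    reflexivity.
Qed.

Lemma edeg_step_born k x f v : reachable k x -> (1 <= v <= k)%nat ->
  edeg (S k) v (heads (x ++ [f])) = (edeg k v (heads x) + b2n (target (heads x) f =? v))%nat.
Proof.
  intros [Hk [Hl _]] Hv. unfold edeg. rewrite heads_app, vdeg_step by (rewrite ?heads_length; auto).
  replace (S k =? v) with false by (symmetry; apply Nat.eqb_neq; lia).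
  replace (S k <? v) with false by (symmetry; apply Nat.ltb_ge; lia).
  replace (k <? v) with false by (symmetry; apply Nat.ltb_ge; lia).
  simpl. lia.
Qed.

Lemma step_mean_ext beta n fs F G : (forall f, In f (omega n) -> F (fs ++ [f]) = G (fs ++ [f])) ->
  step_mean beta n fs F = step_mean beta n fs G.
Proof. intros H. unfold step_mean. apply sumR_map_ext. intros f Hf. rewrite H; auto. Qed.

Lemma step_mean_scal beta n fs c F :
  step_mean beta n fs (fun y => c * F y) = c * step_mean beta n fs F.
Proof.
  unfold step_mean. rewrite <- sumR_map_scal. apply sumR_map_ext. intros. ring.
Qed.

Definition deg_mart (beta : R) (K t v n : nat) (fs : list choice) : R :=
  rising K (INR (edeg (Nat.min n t) v (heads fs)) + beta) / mnorm beta K (Nat.min n t).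

Section DegreeMartingale.
Variables (beta : R) (K t v : nat).
Hypotheses (Hb : 0 < beta) (Hv : (1 <= v)%nat).

Lemma deg_mart_frozen k x : (t <= k)%nat -> reachable k x ->
  step_mean beta k x (deg_mart beta K t v (S k)) = deg_mart beta K t v k x.
Proof.
  intros Htk Hr. pose proof Hr as [Hk [Hl _]].
  rewrite (step_mean_ext _ _ _ _ (fun _ => deg_mart beta K t v k x)) by
    (intros f _; unfold deg_mart, edeg;
     replace (Nat.min (S k) t) with t by lia; replace (Nat.min k t) with t by lia;
     rewrite heads_app, (vdeg_app_ge t k) by (rewrite ?heads_length; auto); reflexivity).
  apply step_mean_const; auto.
Qed.

Lemma deg_mart_unborn k x : (k < t)%nat -> (k < v)%nat -> reachable k x ->
  step_mean beta k x (deg_mart beta K t v (S k)) <= deg_mart beta K t v k x.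
Proof.
  intros Htk Hkv Hr. pose proof Hr as [Hk _].
  rewrite (step_mean_ext _ _ _ _ (fun _ => rising K (1 + beta) / mnorm beta K (S k))) by
    (intros f Hf; unfold deg_mart; replace (Nat.min (S k) t) with (S k) by lia;
     rewrite edeg_step_unborn by auto; simpl INR; reflexivity).
  rewrite step_mean_const by auto.
  unfold deg_mart. replace (Nat.min k t) with k by lia. rewrite edeg_unborn by auto. simpl INR.
  unfold Rdiv. apply Rmult_le_compat_l; [left; apply rising_pos; lra |].
  apply Rinv_le_contravar; [apply mnorm_pos; auto | apply mnorm_le_S; auto].
Qed.

(* Once v is born the process is an exact martingale: the expected increment
   of rising_K(d + beta) is rising_K(d + beta) * K / D_k. *)
Lemma deg_mart_born k x : (k < t)%nat -> (v <= k)%nat -> reachable k x ->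
  step_mean beta k x (deg_mart beta K t v (S k)) = deg_mart beta K t v k x.
Proof.
  intros Htk Hvk Hr. pose proof Hr as [Hk [Hl _]].
  set (X := INR (edeg k v (heads x)) + beta).
  set (P := mnorm beta K k).
  assert (HX : 0 < X) by (unfold X; pose proof (pos_INR (edeg k v (heads x))); lra).
  assert (HD := Dn_pos beta k Hb Hk). assert (HP : 0 < P) by apply mnorm_pos, Hb.
  assert (Hshift : (rising K (X + 1) - rising K X) * X = rising K X * INR K)
    by (rewrite Rmult_minus_distr_r, rising_shift; ring).
  assert (Hdeg : beta + INR (vdeg k v (heads x)) = X).
  { unfold X, edeg. replace (k <? v) with false by (symmetry; apply Nat.ltb_ge; lia).
    rewrite Nat.add_0_r. ring. }
  unfold step_mean, deg_mart. replace (Nat.min (S k) t) with (S k) by lia.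
  replace (Nat.min k t) with k by lia. rewrite mnorm_S by auto. fold P X.
  rewrite (sumR_map_ext _ (fun f => rising K X / (P * (1 + INR K / Dn beta k)) * pw beta k f
       + (rising K (X + 1) - rising K X) / (P * (1 + INR K / Dn beta k)) *
         (pw beta k f * INR (b2n (target (heads x) f =? v))))).
  - rewrite sumR_map_plus, !sumR_map_scal, hit_prob, Hdeg by (rewrite ?heads_length; auto; lia).
    rewrite pw_total by auto.
    field_simplify_eq; [rewrite <- Hshift; ring |].
    pose proof (pos_INR K). repeat split; lra.
  - intros f _. rewrite edeg_step_born, plus_INR by (auto; lia).
    replace (INR (edeg k v (heads x)) + INR (b2n (target (heads x) f =? v)) + beta)
      with (X + INR (b2n (target (heads x) f =? v))) by (unfold X; ring).
    rewrite rising_b2n. field. pose proof (pos_INR K). repeat split; lra.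
Qed.

Lemma deg_mart_super k x : reachable k x ->
  step_mean beta k x (deg_mart beta K t v (S k)) <= deg_mart beta K t v k x.
Proof.
  intros Hr. destruct (Nat.le_gt_cases t k).
  - right. apply deg_mart_frozen; auto.
  - destruct (Nat.lt_ge_cases k v).
    + apply deg_mart_unborn; auto.
    + right. apply deg_mart_born; auto.
Qed.

Lemma vertex_moment N : (1 <= t <= N)%nat ->
  expect beta N (fun fs => rising K (INR (vdeg t v (heads fs)) + beta))
  <= mnorm beta K t * rising K (1 + beta).
Proof.
  intros Ht. pose proof (mnorm_pos beta K t Hb) as HP. unfold expect.
  eapply Rle_trans.
  - apply (expect_super beta (N - 1) 1 [] _ (fun n x => mnorm beta K t * deg_mart beta K t v n x));
      [auto | apply reachable_start | |].
    + intros x _. unfold deg_mart. replace (Nat.min (1 + (N - 1)) t) with t by lia.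
      field_simplify; [| lra]. apply rising_mono. unfold edeg. rewrite plus_INR.
      pose proof (pos_INR (vdeg t v (heads x))). pose proof (pos_INR (b2n (t <? v))). lra.
    + intros k x _ Hx. rewrite step_mean_scal.
      apply Rmult_le_compat_l; [lra | apply deg_mart_super; auto].
  - apply Rmult_le_compat_l; [lra |].
    unfold deg_mart, edeg. replace (Nat.min 1 t) with 1%nat by lia. simpl mnorm.
    rewrite Rdiv_1_r. apply rising_mono. destruct (1 <? v); simpl; lra.
Qed.
End DegreeMartingale.

(** * From vertex degrees to the maximum degree of H_t *)

Lemma blk_range m t x j : (1 <= m)%nat -> (1 <= j)%nat -> (x <= t)%nat -> blk m t x = j ->
  ((j - 1) * m + 1 <= x < (j - 1) * m + 1 + m)%nat.
Proof.
  intros Hm Hj Hx Hb. unfold blk, ceil_div in Hb.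
  assert ((x + m - 1) / m <= (t + m - 1) / m)%nat by (apply Nat.Div0.div_le_mono; lia).
  rewrite Nat.min_l in Hb by auto.
  pose proof (Nat.div_mod_eq (x + m - 1) m).
  pose proof (Nat.mod_upper_bound (x + m - 1) m ltac:(lia)).
  rewrite Hb in H0. nia.
Qed.

Lemma b2n_blk_le m t x j : (1 <= m)%nat -> (1 <= j)%nat -> (x <= t)%nat ->
  (b2n (blk m t x =? j) <= nsum (map (fun v => b2n (x =? v)) (seq ((j - 1) * m + 1) m)))%nat.
Proof.
  intros Hm Hj Hx. destruct (blk m t x =? j) eqn:E; simpl; [| lia].
  apply Nat.eqb_eq, blk_range in E; auto.
  rewrite (map_ext _ (fun v => b2n (v =? x))) by (intros; rewrite Nat.eqb_sym; auto).
  rewrite count_seq.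
  destruct ((j - 1) * m + 1 <=? x) eqn:E1; [| apply Nat.leb_gt in E1; lia].
  destruct (x <? (j - 1) * m + 1 + m) eqn:E2; [| apply Nat.ltb_ge in E2; lia]. simpl. lia.
Qed.

Lemma degH_le_block N fs m t j : reachable N fs -> (t <= N)%nat -> (1 <= m)%nat -> (1 <= j)%nat ->
  (degH m t (heads fs) j <= nsum (map (fun v => vdeg t v (heads fs)) (seq ((j - 1) * m + 1) m)))%nat.
Proof.
  intros Hr HtN Hm Hj. unfold degH, vdeg.
  rewrite (nsum_exchange (fun v k => b2n (k =? v) + b2n (nth (k - 2) (heads fs) 0 =? v))%nat).
  apply nsum_le. intros k Hk. apply in_seq in Hk. rewrite nsum_plus.
  apply Nat.add_le_mono; apply b2n_blk_le; auto; try lia.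
  apply (reachable_heads_le N); auto; lia.
Qed.

Lemma maxdegH_le N fs m t : reachable N fs -> (t <= N)%nat -> (1 <= m)%nat ->
  (maxdegH m t (heads fs) <= m * nmax (map (fun v => vdeg t v (heads fs)) (seq 1 (t + m))))%nat.
Proof.
  intros Hr HtN Hm. unfold maxdegH. apply nmax_le. intros d Hd. apply in_map_iff in Hd.
  destruct Hd as [j [<- Hj]]. apply in_seq in Hj.
  eapply Nat.le_trans; [apply (degH_le_block N); auto; lia |].
  eapply Nat.le_trans;
    [apply nsum_le_const with (c := nmax (map (fun v => vdeg t v (heads fs)) (seq 1 (t + m)))) |
     rewrite length_seq; lia].
  intros v Hv. apply nmax_ge, (in_map (fun v => vdeg t v (heads fs))), in_seq. apply in_seq in Hv.
  unfold ceil_div in Hj.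
  assert (m * ((t + m - 1) / m) <= t + m - 1)%nat by (apply Nat.Div0.mul_div_le).
  nia.
Qed.

(* K-th moment of Delta(H_t), via max <= sum and the single-vertex bound. *)
Lemma maxdeg_moment beta m t N K : 0 < beta -> (1 <= m)%nat -> (1 <= t <= N)%nat -> (1 <= K)%nat ->
  expect beta N (fun fs => INR (maxdegH m t (heads fs)) ^ K) <=
  INR m ^ K * (INR (t + m) * (mnorm beta K t * rising K (1 + beta))).
Proof.
  intros Hb Hm Ht HK. unfold expect.
  apply Rle_trans with (expect_from beta (N - 1) 1 []
     (fun fs => INR m ^ K * sumR (map (fun v => rising K (INR (vdeg t v (heads fs)) + beta))
                                      (seq 1 (t + m))))).
  - apply expect_mono; [auto | apply reachable_start |].
    intros x Hx. replace (1 + (N - 1))%nat with N in Hx by lia.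
    pose proof (maxdegH_le N x m t Hx ltac:(lia) Hm) as Hmax.
    set (D := nmax (map (fun v => vdeg t v (heads x)) (seq 1 (t + m)))) in *.
    apply Rle_trans with (INR (m * D) ^ K);
      [apply pow_incr; split; [apply pos_INR | apply le_INR; auto] |].
    rewrite mult_INR, Rpow_mult_distr. apply Rmult_le_compat_l; [apply pow_le, pos_INR |].
    eapply Rle_trans; [apply pow_nmax_le; auto |].
    rewrite map_map. apply sumR_map_le. intros v _. apply pow_le_rising; [apply pos_INR | lra].
  - rewrite expect_scal. apply Rmult_le_compat_l; [apply pow_le, pos_INR |].
    rewrite expect_sum. eapply Rle_trans; [apply sumR_le_const | rewrite length_seq; apply Rle_refl].
    intros v Hv. apply in_seq in Hv. apply vertex_moment; auto; lia.
Qed.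

Lemma ln_le x y : 0 < x -> x <= y -> ln x <= ln y.
Proof. intros Hx [H | H]; [left; apply ln_increasing; auto | subst; lra]. Qed.

Lemma ln_1_plus_inv j : 0 < j -> / (j + 1) <= ln (1 + / j).
Proof.
  intros Hj.
  assert (H1 : 1 - / (j + 1) <= exp (- / (j + 1)))
    by (pose proof (exp_ineq1_le (- / (j + 1))); lra).
  assert (Hp : 0 < 1 - / (j + 1)).
  { assert (/ (j + 1) < 1) by (rewrite <- Rinv_1; apply Rinv_lt_contravar; lra). lra. }
  pose proof (ln_le _ _ Hp H1) as H. rewrite ln_exp in H.
  replace (1 + / j) with (/ (1 - / (j + 1))) by (field; split; lra).
  rewrite ln_Rinv by auto. lra.
Qed.

Lemma Rpower_ge_lin x a : 0 < x -> 1 + a * ln x <= Rpower x a.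
Proof. intros. unfold Rpower. pose proof (exp_ineq1_le (a * ln x)). lra. Qed.

Section MnormGrowth.
Variables (beta eta : R) (K : nat).
Hypotheses (Hb : 0 < beta) (He : 0 < eta).

(* The exponent K(1+eta)/(2+beta): slightly more than the true growth rate K/(2+beta). *)
Let a := INR K * (1 + eta) / (2 + beta).

Lemma a_nonneg : 0 <= a.
Proof. unfold a. apply div_nonneg; [pose proof (pos_INR K); nra | lra]. Qed.

Lemma mnorm_factor_le j : 2 + beta + 2 * (1 + eta) <= eta * (2 + beta) * INR j ->
  1 + INR K / Dn beta j <= Rpower (1 + / INR j) a.
Proof.
  intros Hj. pose proof (pos_INR K). pose proof (pos_INR j).
  assert (0 < eta * (2 + beta)) by nra.
  assert (Hj0 : 0 < INR j) by nra.
  assert (HD : 0 < Dn beta j) by (unfold Dn; nra).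
  eapply Rle_trans; [| apply Rpower_ge_lin; pose proof (Rinv_0_lt_compat _ Hj0); lra].
  apply Rplus_le_compat_l.
  eapply Rle_trans; [| apply Rmult_le_compat_l; [apply a_nonneg | apply ln_1_plus_inv; exact Hj0]].
  replace (a * / (INR j + 1)) with (INR K * ((1 + eta) / ((2 + beta) * (INR j + 1))))
    by (unfold a; field; lra).
  unfold Rdiv at 1. apply Rmult_le_compat_l; auto.
  rewrite <- (Rmult_1_l (/ _)). apply frac_le; [lra | nra |]. unfold Dn. nra.
Qed.

Lemma mnorm_tail J t : (1 <= J <= t)%nat ->
  (forall j, (J <= j)%nat -> 1 + INR K / Dn beta j <= Rpower (1 + / INR j) a) ->
  mnorm beta K t <= mnorm beta K J * Rpower (INR t / INR J) a.
Proof.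
  intros [HJ HJt] Hstep. assert (HPJ := mnorm_pos beta K J Hb). induction HJt.
  - unfold Rdiv. rewrite Rinv_r by (apply not_0_INR; lia).
    unfold Rpower. rewrite ln_1, Rmult_0_r, exp_0. lra.
  - assert (0 < INR m) by (apply lt_0_INR; lia). assert (0 < INR J) by (apply lt_0_INR; lia).
    rewrite mnorm_S by lia. eapply Rle_trans.
    + apply Rmult_le_compat; [left; apply mnorm_pos; auto | | exact IHHJt | apply (Hstep m); auto].
      pose proof (mnorm_factor_ge1 beta K m Hb ltac:(lia)). lra.
    + rewrite Rmult_assoc. apply Rmult_le_compat_l; [lra |].
      rewrite Rpower_mult_distr;
        [| apply Rdiv_lt_0_compat; auto | pose proof (Rinv_0_lt_compat _ H); lra].
      right. f_equal. rewrite S_INR. field. lra.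
Qed.

Lemma mnorm_bound : exists C, 0 < C /\ forall t, (1 <= t)%nat -> mnorm beta K t <= C * Rpower (INR t) a.
Proof.
  destruct (INR_unbounded ((2 + beta + 2 * (1 + eta)) / (eta * (2 + beta)))) as [J0 HJ0].
  set (J := S J0). assert (HJ1 : (1 <= J)%nat) by (unfold J; lia).
  assert (Hthr : forall j, (J <= j)%nat -> 2 + beta + 2 * (1 + eta) <= eta * (2 + beta) * INR j).
  { intros j Hj. assert (INR J0 <= INR j) by (apply le_INR; unfold J in Hj; lia).
    assert (Hpos : 0 < eta * (2 + beta)) by nra.
    apply Rlt_le in HJ0. apply (Rmult_le_compat_l (eta * (2 + beta))) in HJ0; [| lra].
    replace (eta * (2 + beta) * ((2 + beta + 2 * (1 + eta)) / (eta * (2 + beta))))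
      with (2 + beta + 2 * (1 + eta)) in HJ0 by (field; lra). nra. }
  exists (mnorm beta K J). split; [apply mnorm_pos; auto |].
  intros t Ht. assert (Ht0 : 1 <= INR t) by (apply (le_INR 1); auto).
  assert (H1 : 1 <= Rpower (INR t) a)
    by (rewrite <- (Rpower_O (INR t)) by lra; apply Rle_Rpower; [lra | apply a_nonneg]).
  pose proof (mnorm_pos beta K J Hb).
  destruct (Nat.le_gt_cases J t) as [HtJ | HtJ].
  - eapply Rle_trans; [apply (mnorm_tail J t); [split; auto | intros j Hj; apply mnorm_factor_le, Hthr, Hj] |].
    apply Rmult_le_compat_l; [lra |]. apply Rle_Rpower_l; [apply a_nonneg |].
    assert (1 <= INR J) by (apply (le_INR 1); auto).
    split; [apply Rdiv_lt_0_compat; lra |].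
    unfold Rdiv. rewrite <- (Rmult_1_r (INR t)) at 2. apply Rmult_le_compat_l; [lra |].
    rewrite <- Rinv_1. apply Rinv_le_contravar; lra.
  - eapply Rle_trans; [apply (mnorm_mono beta K t J); auto; lia |]. nra.
Qed.
End MnormGrowth.

(* One step of sum_{i<=n} i^{-p} <= (2/q) n^q, q = 1-p: comparison with the integral. *)
Lemma rpower_increment x p : 2 <= x -> 0 < p < 1 ->
  Rpower x (- p) <= 2 / (1 - p) * (Rpower x (1 - p) - Rpower (x - 1) (1 - p)).
Proof.
  intros Hx Hp. set (q := 1 - p). set (u := / x).
  assert (Hu : 0 < u <= / 2)
    by (unfold u; split; [apply Rinv_0_lt_compat; lra | apply Rinv_le_contravar; lra]).
  assert (Hq : 0 < q < 1) by (unfold q; lra).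
  replace (x - 1) with (x * (1 - u)) by (unfold u; field; lra).
  rewrite <- Rpower_mult_distr by lra.
  assert (Hl : ln (1 - u) <= - u).
  { pose proof (exp_ineq1_le (- u)). pose proof (ln_le (1 - u) (exp (- u)) ltac:(lra) ltac:(lra)).
    rewrite ln_exp in H0. auto. }
  assert (H2 : Rpower (1 - u) q <= / (1 + q * u)).
  { unfold Rpower. apply Rle_trans with (exp (- (q * u))).
    - destruct (Req_dec (q * ln (1 - u)) (- (q * u))) as [E | E]; [rewrite E; lra |].
      left. apply exp_increasing. nra.
    - rewrite exp_Ropp. apply Rinv_le_contravar; [nra |]. apply exp_ineq1_le. }
  assert (E2 : Rpower x (- p) = Rpower x q * u).
  { unfold u. rewrite <- (Rpower_1 x) at 3 by lra. rewrite <- Rpower_Ropp, <- Rpower_plus.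
    f_equal. unfold q. ring. }
  rewrite E2. pose proof (Rpower_pos x q).
  assert (H3 : q * u / 2 <= 1 - / (1 + q * u)).
  { assert (0 < q * u) by nra. assert (q * u <= 1) by nra.
    replace (1 - / (1 + q * u)) with (q * u / (1 + q * u)) by (field; lra).
    apply frac_le; [lra | lra | nra]. }
  apply Rle_trans with (2 / q * (Rpower x q * (q * u / 2))); [right; field; lra |].
  apply Rmult_le_compat_l; [apply div_nonneg; lra |]. nra.
Qed.

Lemma sum_rpower_le p n : 0 < p < 1 -> (1 <= n)%nat ->
  sumR (map (fun i => Rpower (INR i) (- p)) (seq 1 n)) <= 2 / (1 - p) * Rpower (INR n) (1 - p).
Proof.
  intros Hp Hn. induction Hn.
  - simpl. unfold Rpower. rewrite ln_1, !Rmult_0_r, exp_0.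
    assert (1 <= 2 / (1 - p)) by (rewrite <- (Rdiv_1_r 1) at 1; apply frac_le; lra). lra.
  - rewrite seq_S, map_app, sumR_app. replace (1 + m)%nat with (S m) by lia.
    cbn [map]. unfold sumR at 2. cbn [fold_right].
    pose proof (rpower_increment (INR (S m)) p) as H. rewrite S_INR in *.
    assert (1 <= INR m) by (apply (le_INR 1); auto).
    replace (INR m + 1 - 1) with (INR m) in H by ring.
    specialize (H ltac:(lra) Hp). lra.
Qed.

Lemma maxdeg_moment_growth beta m K eta : 0 < beta -> (1 <= m)%nat -> (1 <= K)%nat -> 0 < eta ->
  exists C, 0 <= C /\ forall t N, (1 <= t <= N)%nat ->
    expect beta N (fun fs => INR (maxdegH m t (heads fs)) ^ K)
    <= C * Rpower (INR t) (1 + INR K * (1 + eta) / (2 + beta)).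
Proof.
  intros Hb Hm HK He. destruct (mnorm_bound beta eta K Hb He) as [C0 [HC0 Hgrow]].
  set (a := INR K * (1 + eta) / (2 + beta)) in Hgrow.
  assert (HR : 0 < rising K (1 + beta)) by (apply rising_pos; lra).
  assert (Hmpow : 0 <= INR m ^ K) by (apply pow_le, pos_INR).
  assert (Hm1 : 1 <= INR m) by (apply (le_INR 1); auto).
  exists (INR m ^ K * (2 * INR m) * C0 * rising K (1 + beta)). split.
  { apply Rmult_le_pos; [| lra]. apply Rmult_le_pos; [| lra]. apply Rmult_le_pos; lra. }
  intros t N Ht. assert (Ht1 : 1 <= INR t) by (apply (le_INR 1); lia).
  eapply Rle_trans; [apply maxdeg_moment; auto; lia |].
  assert (Htm : INR (t + m) <= 2 * INR m * INR t) by (rewrite plus_INR; nra).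
  pose proof (Hgrow t ltac:(lia)) as Hmn. pose proof (mnorm_pos beta K t Hb).
  rewrite Rpower_plus, Rpower_1 by lra.
  apply Rmult_le_compat_l with (r := INR m ^ K) in Htm; [| lra].
  apply Rle_trans with (INR m ^ K * (2 * INR m * INR t) * (C0 * Rpower (INR t) a * rising K (1 + beta))).
  - rewrite <- Rmult_assoc. apply Rmult_le_compat; [| nra | exact Htm | apply Rmult_le_compat_r; lra].
    apply Rmult_le_pos; [lra | apply pos_INR].
  - right. unfold a. ring.
Qed.

(** * Pigeonhole and Markov *)

Lemma sumR_map_lt {A} (f g : A -> R) l : l <> [] ->
  (forall x, In x l -> f x < g x) -> sumR (map f l) < sumR (map g l).
Proof.
  destruct l as [|a l]; [congruence |]. intros _ H. simpl.
  assert (f a < g a) by (apply H; left; auto).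
  assert (sumR (map f l) <= sumR (map g l)) by (apply sumR_map_le; intros; left; apply H; right; auto).
  lra.
Qed.

Lemma exists_big {A} (l : list A) (y w : A -> R) T : l <> [] -> 0 < T ->
  (forall i, In i l -> 0 < w i) -> T <= sumR (map y l) ->
  exists i, In i l /\ T * w i <= y i * sumR (map w l).
Proof.
  intros Hl HT Hw HS. apply NNPP. intro Hn.
  assert (Hall : forall i, In i l -> y i * sumR (map w l) < T * w i).
  { intros i Hi. apply Rnot_le_lt. intro Hc. apply Hn. exists i; auto. }
  assert (HW : 0 < sumR (map w l)).
  { destruct l as [|a l']; [congruence |]. simpl. pose proof (Hw a (or_introl eq_refl)).
    assert (0 <= sumR (map w l')) by (apply sumR_map_nonneg; intros; left; apply Hw; right; auto).
    lra. }
  assert (Hs : sumR (map (fun i => sumR (map w l) * y i) l) < sumR (map (fun i => T * w i) l))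
    by (apply sumR_map_lt; auto; intros; rewrite Rmult_comm; auto).
  rewrite !sumR_map_scal in Hs. nra.
Qed.

Lemma event_bound {A} (l : list A) (y w : A -> R) T (k : nat) : l <> [] -> 0 < T ->
  (forall i, In i l -> 0 < w i) -> (forall i, In i l -> 0 <= y i) ->
  (if Rle_dec T (sumR (map y l)) then 1 else 0) <=
  sumR (map (fun i => (y i * sumR (map w l) / (T * w i)) ^ k) l).
Proof.
  intros Hl HT Hw Hy.
  assert (HW : 0 <= sumR (map w l)) by (apply sumR_map_nonneg; intros; left; apply Hw; auto).
  assert (Hnn : forall i, In i l -> 0 <= (y i * sumR (map w l) / (T * w i)) ^ k).
  { intros i Hi. apply pow_le, div_nonneg; [apply Rmult_le_pos; auto |].
    apply Rmult_lt_0_compat; auto. }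
  destruct (Rle_dec T (sumR (map y l))) as [HS | HS]; [| apply sumR_map_nonneg; auto].
  destruct (exists_big l y w T Hl HT Hw HS) as [j [Hj Hjb]].
  eapply Rle_trans; [| apply (sumR_ge_elem (fun i => (y i * sumR (map w l) / (T * w i)) ^ k)); eauto].
  apply pow_R1_Rle. assert (HTw : 0 < T * w j) by (apply Rmult_lt_0_compat; auto).
  rewrite <- (Rdiv_diag (T * w j)) by lra. apply frac_le; [lra | lra |].
  apply Rmult_le_compat_r; lra.
Qed.

Definition ndeg2 (beta : R) (m i : nat) (hs : list nat) : R :=
  (INR (maxdegH m (m * i) hs) / Rpower (INR (m * i)) (2 / (2 + beta))) ^ 2.

Lemma Rpower_pow_mult x a k : 0 < x -> Rpower x a ^ k = Rpower x (INR k * a).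
Proof.
  intros Hx. rewrite <- Rpower_pow by apply Rpower_pos. rewrite Rpower_mult. f_equal. ring.
Qed.

(* The weight i^{kp}, the normalisation (mi)^{-4k/(2+beta)} and the moment growth
   (mi)^{1+2k(1+eta)/(2+beta)} combine to i * m^{1-kp}: the dependence on i cancels. *)
Lemma exponents_cancel beta eta m i k p : 0 < beta -> (1 <= m)%nat -> (1 <= i)%nat ->
  p = 2 * (1 - eta) / (2 + beta) ->
  Rpower (INR i) (INR k * p) * Rpower (INR (m * i)) (INR (2 * k) * - (2 / (2 + beta)))
  * Rpower (INR (m * i)) (1 + INR (2 * k) * (1 + eta) / (2 + beta))
  = INR i * Rpower (INR m) (1 - INR k * p).
Proof.
  intros Hb Hm Hi Hp. subst p.
  assert (0 < INR m) by (apply lt_0_INR; lia). assert (0 < INR i) by (apply lt_0_INR; lia).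
  rewrite <- (exp_ln (INR i)) at 2 by auto.
  unfold Rpower. rewrite !mult_INR, ln_mult by auto. rewrite <- !exp_plus. f_equal.
  simpl INR. field. lra.
Qed.

Section WeightedTerm.
Variables (beta eta C W T : R) (m n k : nat).
Hypotheses (Hb : 0 < beta) (Hm : (1 <= m)%nat)
  (He : 0 < eta <= 1) (HW : 0 <= W) (HT : 0 < T) (HC : 0 <= C).
Hypothesis Hgrowth : forall t N, (1 <= t <= N)%nat ->
  expect beta N (fun fs => INR (maxdegH m t (heads fs)) ^ (2 * k))
  <= C * Rpower (INR t) (1 + INR (2 * k) * (1 + eta) / (2 + beta)).

Let p := 2 * (1 - eta) / (2 + beta).

Lemma p_nonneg : 0 <= p.
Proof. unfold p. apply div_nonneg; lra. Qed.

Lemma weighted_term_bound i : (1 <= i <= n)%nat ->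
  expect beta (m * n) (fun fs => (ndeg2 beta m i (heads fs) * W / (T * Rpower (INR i) (- p))) ^ k)
  <= (W / T) ^ k * (C * (INR m * INR n)).
Proof.
  intros Hi. assert (Hmi : (1 <= m * i)%nat) by nia.
  assert (Hxi : 0 < INR i) by (apply lt_0_INR; lia).
  assert (Hxmi : 0 < INR (m * i)) by (apply lt_0_INR; lia).
  assert (Hm1 : 1 <= INR m) by (apply (le_INR 1); auto).
  set (c := 2 / (2 + beta)).
  set (F := Rpower (INR i) (INR k * p) * Rpower (INR (m * i)) (INR (2 * k) * - c)).
  assert (HF : 0 <= F) by (apply Rmult_le_pos; left; apply Rpower_pos).
  unfold expect. rewrite (expect_ext _ _ _ _ _ (fun fs => ((W / T) ^ k * F)
      * INR (maxdegH m (m * i) (heads fs)) ^ (2 * k))).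
  2:{ intros fs. unfold ndeg2, F. fold c.
      rewrite <- (Rpower_pow_mult _ p), <- Rpower_pow_mult, Rpower_Ropp, Rpower_Ropp by auto.
      unfold Rdiv. rewrite !Rpow_mult_distr, Rinv_mult, !pow_mult, !Rpow_mult_distr, Rinv_inv. ring. }
  rewrite expect_scal. assert (HWT : 0 <= (W / T) ^ k) by (apply pow_le, div_nonneg; auto).
  eapply Rle_trans.
  { apply Rmult_le_compat_l; [apply Rmult_le_pos; auto |]. apply (Hgrowth (m * i) (m * n)). nia. }
  rewrite (Rmult_assoc ((W / T) ^ k)). apply Rmult_le_compat_l; [exact HWT |].
  rewrite <- Rmult_assoc, (Rmult_comm F C), Rmult_assoc. apply Rmult_le_compat_l; [exact HC |].
  unfold F, c. rewrite (exponents_cancel beta eta m i k p) by (reflexivity || auto || lia).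
  assert (Hpow : Rpower (INR m) (1 - INR k * p) <= INR m).
  { rewrite <- (Rpower_1 (INR m)) at 2 by lra. apply Rle_Rpower; [lra |].
    pose proof p_nonneg. pose proof (pos_INR k). nra. }
  assert (INR i <= INR n) by (apply le_INR; lia). pose proof (Rpower_pos (INR m) (1 - INR k * p)).
  nra.
Qed.
End WeightedTerm.

Lemma prob_B_markov beta m n delta (w : nat -> R) k : 0 < beta -> (1 <= n)%nat ->
  (forall i, 0 < w i) ->
  prob_B beta m n delta <= sumR (map (fun i => expect beta (m * n) (fun fs =>
    (ndeg2 beta m i (heads fs) * sumR (map w (seq 1 n))
     / (Rpower (INR n) (beta / (2 + beta) + delta) * w i)) ^ k)) (seq 1 n)).
Proof.
  intros Hb Hn Hw. unfold prob_B, expect. eapply Rle_trans; [| apply Req_le, expect_sum].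
  apply expect_mono; [auto | apply reachable_start |]. intros x _.
  apply (event_bound (seq 1 n) (fun i => ndeg2 beta m i (heads x)) w); auto.
  - destruct n; [lia | discriminate].
  - apply Rpower_pos.
  - intros; apply pow2_ge_0.
Qed.

Lemma weight_exponent_range beta eta : 0 < beta -> 0 < eta < 1 ->
  0 < 2 * (1 - eta) / (2 + beta) < 1.
Proof.
  intros Hb He. split; [apply Rdiv_lt_0_compat; lra |].
  apply Rmult_lt_reg_r with (2 + beta); [lra |].
  unfold Rdiv. rewrite Rmult_assoc, Rinv_l by lra. lra.
Qed.

Lemma weight_ratio_bound beta delta eta n : 0 < beta -> 0 < eta <= 1 / 2 ->
  eta <= delta * (2 + beta) / 4 -> (1 <= n)%nat ->
  let p := 2 * (1 - eta) / (2 + beta) in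
  sumR (map (fun i => Rpower (INR i) (- p)) (seq 1 n)) / Rpower (INR n) (beta / (2 + beta) + delta)
  <= 2 / (1 - p) * Rpower (INR n) (- (delta / 2)).
Proof.
  intros Hb He Hed Hn p.
  assert (Hp : 0 < p < 1) by (apply weight_exponent_range; lra).
  assert (Hn1 : 1 <= INR n) by (apply (le_INR 1); auto).
  unfold Rdiv at 1. rewrite <- Rpower_Ropp.
  eapply Rle_trans;
    [apply Rmult_le_compat_r; [left; apply Rpower_pos | apply sum_rpower_le; auto] |].
  rewrite Rmult_assoc, <- Rpower_plus.
  apply Rmult_le_compat_l; [apply div_nonneg; lra |]. apply Rle_Rpower; [lra |].
  replace (1 - p + - (beta / (2 + beta) + delta)) with (2 * eta / (2 + beta) - delta)
    by (unfold p; field; lra).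
  assert (2 * eta / (2 + beta) <= delta / 2).
  { apply frac_le; lra. }
  lra.
Qed.

Lemma final_decay (n k : nat) (C Cm r q delta gamma : R) : (1 <= n)%nat -> 0 <= C -> 0 <= Cm -> 0 < q ->
  0 <= r <= 2 / q * Rpower (INR n) (- (delta / 2)) -> 2 + gamma <= INR k * delta / 2 ->
  INR n * (r ^ k * (C * (Cm * INR n))) <= C * Cm * (2 / q) ^ k * Rpower (INR n) (- gamma).
Proof.
  intros Hn HC HCm Hq [Hr0 Hr] Hk. assert (Hn1 : 1 <= INR n) by (apply (le_INR 1); auto).
  assert (Hrk : r ^ k <= (2 / q) ^ k * Rpower (INR n) (- (INR k * delta / 2))).
  { eapply Rle_trans; [apply pow_incr; split; [exact Hr0 | exact Hr] |].
    rewrite Rpow_mult_distr, Rpower_pow_mult by lra. right. f_equal. f_equal. field. }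
  assert (Hfin : INR n * INR n * Rpower (INR n) (- (INR k * delta / 2)) <= Rpower (INR n) (- gamma)).
  { replace (INR n * INR n) with (Rpower (INR n) 2)
      by (replace 2 with (INR 2) by reflexivity; rewrite Rpower_pow by lra; simpl; ring).
    rewrite <- Rpower_plus. apply Rle_Rpower; lra. }
  assert (HCC : 0 <= C * Cm) by (apply Rmult_le_pos; auto).
  assert (H0 : 0 <= C * Cm * (2 / q) ^ k) by (apply Rmult_le_pos; [lra | apply pow_le, div_nonneg; lra]).
  replace (INR n * (r ^ k * (C * (Cm * INR n)))) with (C * Cm * (INR n * INR n) * r ^ k) by ring.
  eapply Rle_trans; [apply Rmult_le_compat_l; [apply Rmult_le_pos; [lra | nra] | exact Hrk] |].
  replace (C * Cm * (INR n * INR n) * ((2 / q) ^ k * Rpower (INR n) (- (INR k * delta / 2))))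
    with (C * Cm * (2 / q) ^ k * (INR n * INR n * Rpower (INR n) (- (INR k * delta / 2)))) by ring.
  apply Rmult_le_compat_l; auto.
Qed.

Lemma large_multiple x y : 0 < y -> exists k : nat, (1 <= k)%nat /\ x <= INR k * y.
Proof.
  intros Hy. destruct (INR_unbounded (x / y)) as [k0 Hk0]. exists (S k0). split; [lia |].
  rewrite S_INR. apply Rlt_le in Hk0.
  apply (Rmult_le_compat_r y) in Hk0; [| lra]. unfold Rdiv in Hk0.
  rewrite Rmult_assoc, Rinv_l, Rmult_1_r in Hk0 by lra. nra.
Qed.

Theorem lemma8 (beta : R) (m : nat) (hbeta : 0 < beta) (hm : (1 <= m)%nat)
  (delta gamma : R) (hdelta : 0 < delta) (hgamma : 0 < gamma) :
  exists L : R, forall n : nat, (1 <= n)%nat ->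
    prob_B beta m n delta <= L * Rpower (INR n) (- gamma).
Proof.
  set (eta := Rmin (1 / 2) (delta * (2 + beta) / 4)).
  assert (He : 0 < eta <= 1 / 2) by
    (split; [apply Rmin_glb_lt; [lra | apply Rdiv_lt_0_compat; nra] | apply Rmin_l]).
  assert (Hed : eta <= delta * (2 + beta) / 4) by apply Rmin_r.
  set (p := 2 * (1 - eta) / (2 + beta)).
  assert (Hq : 0 < 1 - p) by (pose proof (weight_exponent_range beta eta hbeta ltac:(lra)); unfold p; lra).
  destruct (large_multiple (2 + gamma) (delta / 2)) as [k [Hk Hkd]]; [lra |].
  destruct (maxdeg_moment_growth beta m (2 * k) eta hbeta hm ltac:(lia) ltac:(lra)) as [C [HC Hg]].
  exists (C * INR m * (2 / (1 - p)) ^ k). intros n Hn.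
  set (T := Rpower (INR n) (beta / (2 + beta) + delta)).
  set (W := sumR (map (fun i => Rpower (INR i) (- p)) (seq 1 n))).
  eapply Rle_trans; [apply (prob_B_markov _ _ _ _ (fun i => Rpower (INR i) (- p)) k);
                      auto; intros; apply Rpower_pos |].
  eapply Rle_trans.
  { apply sumR_le_const. intros i Hi. apply in_seq in Hi.
    apply (weighted_term_bound beta eta C W T m n k); auto; try lra; try lia.
    - apply sumR_map_nonneg. intros. left. apply Rpower_pos.
    - apply Rpower_pos. }
  rewrite length_seq. apply final_decay with (delta := delta); auto; [apply pos_INR | | lra].
  split; [apply div_nonneg; [apply sumR_map_nonneg; intros; left; apply Rpower_pos | apply Rpower_pos] |].
  apply weight_ratio_bound; auto.
Qed.
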